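(* Let $k\ge 3$ be an odd integer. Then $\chi_\rho(S^2_{C_k})\ge 5$.
   Context: $C_k$ is the cycle with vertex set $[k]=\{0,\dots,k-1\}$ and edges $\{i,i+1\}$ (indices mod $k$). For a graph $G$ with vertex set $[k]$, the generalized Sierpi\'nski graph $S^2_G$ has vertex set $[k]^2$, where $ab$ and $cd$ are adjacent iff either $a=c$ and $bd\in E(G)$, or $a\neq c$, $ac\in E(G)$, $b=c$ and $d=a$. A packing $c$-coloring of a graph $X$ is a map $f:V(X)\to\{1,\dots,c\}$ such that any two distinct vertices $u,v$ with $f(u)=f(v)=i$ satisfy $d_X(u,v)>i$; the packing chromatic number $\chi_\rho(X)$ is the least such $c$. *)

From mathcomp Require Import all_boot.
Set Implicit Arguments. Unset Strict Implicit. Unset Printing Implicit Defensive.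

Definition cycle_adj (k : nat) : rel 'I_k :=
  fun i j => (j == (i.+1 %% k) :> nat) || (i == (j.+1 %% k) :> nat).

(* Generalized Sierpinski graph S^2_G, vertices ab encoded as pairs (a,b). *)
Definition sierpinski2_adj (k : nat) (G : rel 'I_k) : rel ('I_k * 'I_k) :=
  fun u v => let: (a, b) := u in let: (c, d) := v in
    ((a == c) && G b d) || [&& a != c, G a c, b == c & d == a].

Definition dist_le (T : finType) (e : rel T) (u v : T) (i : nat) : Prop :=
  exists p : seq T, [/\ path e u p, last u p = v & size p <= i].

Definition packing_coloring (T : finType) (e : rel T) (c : nat) (f : T -> nat) : Prop :=
  (forall x, 1 <= f x <= c) /\
  (forall u v, u != v -> f u = f v -> ~ dist_le e u v (f u)).

(** The proof is computer-assisted.  For [k = 3] and [k = 5] the whole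
    graph [S^2_{C_k}] has no packing 4-coloring.  For [k >= 7], consider
    four consecutive copies [x, x+1, x+2, x+3] of [C_k] in [S^2_{C_k}], each
    restricted to the seven vertices [(y, y + t - 3)], [t < 7], around its
    extreme vertex [(y, y)].  Together with the three bridge edges
    [(y, y+1) -- (y+1, y)] they form a subgraph on 28 vertices, independent
    of [k], and a search over all of its packing 4-colorings shows that
    exactly one of the extreme vertices [(x+1, x+1)] and [(x+2, x+2)] gets
    color 4.  Going once around the odd cycle of extreme vertices [(i, i)],
    the property "has color 4" would have to alternate an odd number of
    times, which is impossible. *)

From mathcomp Require Import all_boot zify.
Set Implicit Arguments. Unset Strict Implicit. Unset Printing Implicit Defensive.

Lemma packing_coloring_widen (T : finType) (e : rel T) c c' f :
  c <= c' -> packing_coloring e c f -> packing_coloring e c' f.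
Proof.
move=> le_cc' [f_range f_sep]; split=> // x.
by case/andP: (f_range x) => -> /leq_trans; apply.
Qed.

Section PackingSearch.

Definition adjacency_lists (adj : rel nat) (n : nat) : seq (seq nat) :=
  mkseq (fun i => [seq j <- iota 0 n | adj i j]) n.

Fixpoint ball (g : seq (seq nat)) (d v : nat) : seq nat :=
  if d is d'.+1 then v :: flatten [seq ball g d' w | w <- nth [::] g v]
  else [:: v].

(* [near x v] must contain every vertex at distance at most [x] from [v];
   [size s] is the vertex to be colored next. *)
Definition admissible (near : nat -> nat -> seq nat) (s : seq nat) (x : nat) :=
  all (fun u => (size s <= u) || (nth 0 s u != x)) (near x (size s)).

(* The [if] (rather than [==>]) prunes inadmissible branches under
   call-by-value evaluation. *)
Fixpoint extensions_satisfy (c : nat) (near : nat -> nat -> seq nat)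
    (goal : pred (seq nat)) (r : nat) (s : seq nat) : bool :=
  if r is r'.+1 then
    all (fun x => if admissible near s x
                  then extensions_satisfy c near goal r' (rcons s x) else true)
        (iota 1 c)
  else goal s.

Definition packing_search (c : nat) (adj : rel nat) (n : nat)
    (goal : pred (seq nat)) : bool :=
  let g := adjacency_lists adj n in extensions_satisfy c (ball g) goal n [::].

Lemma mem_adjacency_lists adj n i j :
  (j \in nth [::] (adjacency_lists adj n) i) = [&& i < n, j < n & adj i j].
Proof.
have [lt_in | le_ni] := ltnP i n; last by rewrite nth_default ?size_mkseq.
by rewrite nth_mkseq // mem_filter mem_iota andbC.
Qed.

Lemma mem_ball g d v u : u \in ball g d v ->
  exists p, [/\ path (fun x y => y \in nth [::] g x) v p, last v p = u
              & size p <= d].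
Proof.
elim: d v => [|d IH] v /=; first by rewrite inE => /eqP->; exists [::].
rewrite inE => /predU1P[->|]; first by exists [::].
case/flatten_mapP => w vw /IH[p [pw lp sp]].
by exists (w :: p); rewrite /= vw.
Qed.

Lemma extensions_satisfyP c near goal n (col : nat -> nat) :
  (forall i, i < n -> 0 < col i <= c) ->
  (forall u v, u < v < n -> col u = col v -> u \notin near (col v) v) ->
  extensions_satisfy c near goal n [::] -> goal (mkseq col n).
Proof.
move=> col_range col_sep.
suff ext r m : m + r = n -> extensions_satisfy c near goal r (mkseq col m) ->
    goal (mkseq col n) by exact: (ext n 0 (add0n n)).
elim: r m => [|r IH] m /= mr; first by rewrite addn0 in mr; rewrite mr.
have lt_mn : m < n by rewrite -mr addnS ltnS leq_addr.
have col_m : col m \in iota 1 c.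
  by rewrite mem_iota add1n ltnS; apply: col_range.
move=> /allP/(_ _ col_m); rewrite -mkseqS.
suff -> : admissible near (mkseq col m) (col m) by apply: IH; rewrite addSnnS.
apply/allP => u; rewrite size_mkseq => near_u.
have [//|lt_um /=] := leqP m u.
rewrite nth_mkseq //; apply/eqP => col_um.
by have := col_sep u m; rewrite lt_um lt_mn near_u => /(_ isT col_um).
Qed.

Variables (T : finType) (e : rel T) (phi : nat -> T) (adj : rel nat) (n : nat).
Hypothesis adj_sound :
  forall i j, i < n -> j < n -> adj i j -> e (phi i) (phi j).
Hypothesis phi_inj : forall i j, i < n -> j < n -> phi i = phi j -> i = j.

Lemma dist_le_ball d v u :
  u \in ball (adjacency_lists adj n) d v -> dist_le e (phi v) (phi u) d.
Proof.
case/mem_ball => p [pp <- sp]; exists (map phi p); split.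
- apply: homo_path pp => x y; rewrite mem_adjacency_lists.
  by case/and3P; apply: adj_sound.
- by rewrite last_map.
- by rewrite size_map.
Qed.

Lemma packing_search_sound c f goal : packing_coloring e c f ->
  packing_search c adj n goal -> goal (mkseq (f \o phi) n).
Proof.
move=> [f_range f_sep]; apply: extensions_satisfyP => [i _|u v].
  exact: f_range.
case/andP => lt_uv lt_vn /= f_uv; apply/negP => /dist_le_ball.
apply: f_sep; last by rewrite f_uv.
apply/eqP => /(phi_inj lt_vn (ltn_trans lt_uv lt_vn)) eq_vu.
by rewrite eq_vu ltnn in lt_uv.
Qed.

End PackingSearch.

Lemma eq_modDr_small d b x y :
  x < d -> y < d -> x + b = y + b %[mod d] -> x = y.
Proof. by move=> xd yd /eqP; rewrite eqn_modDr !modn_small // => /eqP. Qed.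

Lemma cycle_adj_sym k : symmetric (@cycle_adj k).
Proof. by move=> i j; rewrite /cycle_adj orbC. Qed.

Section SierpinskiAdjacency.

Variables (k : nat) (G : rel 'I_k).

Lemma sierpinski2_adj_copy a b d : G b d -> sierpinski2_adj G (a, b) (a, d).
Proof. by move=> Gbd; rewrite /= eqxx Gbd. Qed.

Lemma sierpinski2_adj_bridge a c :
  a != c -> G a c -> sierpinski2_adj G (a, c) (c, a).
Proof. by move=> neq_ac Gac; rewrite /= neq_ac Gac !eqxx orbT. Qed.

Lemma sierpinski2_adj_sym : symmetric G -> symmetric (sierpinski2_adj G).
Proof.
move=> Gsym [a b] [c d] /=; rewrite [G d b]Gsym [G c a]Gsym [c == a]eq_sym.
by case: (b == c) (d == a) => [] []; rewrite ?andbF ?andbT.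
Qed.

End SierpinskiAdjacency.

Definition grid_point (i : nat) : nat * nat := (i %/ 7, i %% 7).

Lemma grid_point_inj : injective grid_point.
Proof.
by move=> i j [quo_ij rem_ij]; rewrite (divn_eq i 7) (divn_eq j 7) quo_ij rem_ij.
Qed.

Definition grid_edge (p q : nat * nat) : bool :=
  ((p.1 == q.1) && (q.2 == p.2.+1)) || [&& p.2 == 4, q.2 == 2 & q.1 == p.1.+1].

Definition grid_adj : rel nat :=
  fun i j => let p := grid_point i in let q := grid_point j in
    grid_edge p q || grid_edge q p.

Lemma gadget_search : packing_search 4 grid_adj 28
  (fun s => (nth 0 s 10 == 4) != (nth 0 s 17 == 4)).
Proof. by vm_compute. Qed.

Section CycleSierpinski.

Variables (k : nat) (kpos : 0 < k).

Local Notation S2C := (sierpinski2_adj (@cycle_adj k)).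

Definition modk (x : nat) : 'I_k := Ordinal (ltn_pmod x kpos).

Definition extreme_vertex (x : nat) : 'I_k * 'I_k := (modk x, modk x).

Lemma modkDr x : modk (x + k) = modk x.
Proof. by apply/val_inj; rewrite /= modnDr. Qed.

Lemma cycle_adj_modkS x : cycle_adj (modk x) (modk x.+1).
Proof. by apply/orP; left; rewrite /= -[(x %% k).+1]addn1 modnDml addn1. Qed.

Lemma modk_neqS x : 1 < k -> modk x != modk x.+1.
Proof.
move=> k_gt1; apply/eqP => /(congr1 val) /= /eqP.
by rewrite eq_sym -add1n -{2}[x]add0n eqn_modDr !modn_small.
Qed.

Definition vertex_of_index (i : nat) : 'I_k * 'I_k := (modk (i %/ k), modk i).

Lemma vertex_of_index_inj i j : i < k * k -> j < k * k ->
  vertex_of_index i = vertex_of_index j -> i = j.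
Proof.
have quo_small x : x < k * k -> x %/ k %% k = x %/ k.
  by move=> xk; rewrite modn_small // ltn_divLR.
move=> ik jk []; rewrite !quo_small // => quo_ij rem_ij.
by rewrite (divn_eq i k) (divn_eq j k) quo_ij rem_ij.
Qed.

Lemma no_packing_coloring_of_search (G : rel 'I_k) c f :
  packing_search c
    (fun i j => sierpinski2_adj G (vertex_of_index i) (vertex_of_index j))
    (k * k) pred0 ->
  ~ packing_coloring (sierpinski2_adj G) c f.
Proof.
move=> search fP.
by have := packing_search_sound (fun i j _ _ => id) vertex_of_index_inj fP search.
Qed.

Hypothesis k_ge7 : 7 <= k.

(* Grid point [(s, t)] is the vertex [(y, y + t - 3)] of copy [y = a + s + 3];
   the sums are ordered so that [(1, 3)] and [(2, 3)] are convertible to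
   [extreme_vertex (4 + a)] and [extreme_vertex (5 + a)]. *)
Definition gadget_vertex (a : nat) (p : nat * nat) : 'I_k * 'I_k :=
  (modk (p.1 + 3 + a), modk (p.2 + p.1 + a)).

Lemma gadget_edge a p q :
  grid_edge p q -> S2C (gadget_vertex a p) (gadget_vertex a q).
Proof.
case: p q => [s t] [s' t']; rewrite /grid_edge /=.
case/orP => [/andP[/eqP <- /eqP ->] | /and3P[/eqP -> /eqP -> /eqP ->]].
  exact/sierpinski2_adj_copy/cycle_adj_modkS.
rewrite /gadget_vertex /=.
have -> : 4 + s + a = (s + 3 + a).+1 by lia.
have -> : s.+1 + 3 + a = (s + 3 + a).+1 by lia.
have -> : 2 + s.+1 + a = s + 3 + a by lia.
apply: sierpinski2_adj_bridge; last exact: cycle_adj_modkS.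
by apply: modk_neqS; lia.
Qed.

Lemma gadget_vertex_inj a p q : p.1 < 4 -> p.2 < 7 -> q.1 < 4 -> q.2 < 7 ->
  gadget_vertex a p = gadget_vertex a q -> p = q.
Proof.
case: p q => [s t] [s' t'] /= s4 t7 s4' t7' [eq_s eq_t].
have eq_ss : s = s'.
  by apply: (eq_modDr_small (d := k) (b := 3 + a)); rewrite ?addnA //; lia.
subst s'.
have -> // : t = t'.
  by apply: (eq_modDr_small (d := k) (b := s + a)); rewrite ?addnA //; lia.
Qed.

Lemma gadget_extreme_alternates a f : packing_coloring S2C 4 f ->
  (f (extreme_vertex (4 + a)) == 4) != (f (extreme_vertex (5 + a)) == 4).
Proof.
move=> fP; pose phi i := gadget_vertex a (grid_point i).
have adj_sound i j : i < 28 -> j < 28 -> grid_adj i j -> S2C (phi i) (phi j).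
  move=> _ _ /orP[] /(gadget_edge a) //.
  by rewrite (sierpinski2_adj_sym (@cycle_adj_sym k)).
have phi_inj i j : i < 28 -> j < 28 -> phi i = phi j -> i = j.
  move=> i28 j28 /gadget_vertex_inj eq_ij; apply: grid_point_inj.
  by apply: eq_ij; rewrite /= ?ltn_divLR ?ltn_pmod.
exact: (packing_search_sound adj_sound phi_inj fP gadget_search).
Qed.

Lemma extreme_color4_alternates f : packing_coloring S2C 4 f ->
  forall i, (f (extreme_vertex i) == 4) != (f (extreme_vertex i.+1) == 4).
Proof.
move=> fP i; have := gadget_extreme_alternates (i + (k - 4)) fP.
have -> : 4 + (i + (k - 4)) = i + k by lia.
have -> : 5 + (i + (k - 4)) = i.+1 + k by lia.
by rewrite /extreme_vertex !modkDr.
Qed.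

End CycleSierpinski.

Lemma alternating_period_even (P : nat -> bool) k :
  (forall i, P i != P i.+1) -> P k = P 0 -> ~~ odd k.
Proof.
move=> alt; suff -> : P k = P 0 (+) odd k by case: (P 0) (odd k) => [] [].
elim: k => [|k IH]; first by rewrite addbF.
by move: (alt k); rewrite IH /=; case: (P 0) (odd k) (P k.+1) => [] [] [].
Qed.

Theorem corollary1 (k : nat) (hk : 3 <= k) (hodd : odd k) :
  forall (c : nat) (f : 'I_k * 'I_k -> nat),
    packing_coloring (sierpinski2_adj (@cycle_adj k)) c f -> 5 <= c.
Proof.
move=> c f fP; rewrite leqNgt; apply/negP => c_lt5.
have {c_lt5 fP} f4 := packing_coloring_widen (c' := 4) c_lt5 fP.
have kpos : 0 < k by apply: leq_trans hk.
have [k3|k5|k7] : [\/ k = 3, k = 5 | 7 <= k].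
  by move: hk hodd; case: k {f f4 kpos} => [|[|[|[|[|[|[|k]]]]]]]; constructor.
1,2: by subst k; apply: (no_packing_coloring_of_search (kpos := kpos) _ f4);
  vm_compute.
have alt := extreme_color4_alternates kpos k7 f4.
have period :
  (f (extreme_vertex kpos k) == 4) = (f (extreme_vertex kpos 0) == 4).
  by rewrite /extreme_vertex -(modkDr kpos 0).
by move: (alternating_period_even alt period); rewrite hodd.
Qed.
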